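(* Let $\mathfrak k$ be a finite-dimensional Lie algebra such that $Y(\mathfrak k)$ is a unique factorisation domain. Let $\lambda\neq0$ be the weight of a semi-invariant $x$ which is irreducible in $S(\mathfrak k)$. Then at least one of the $Y(\mathfrak k)$-modules $S(\mathfrak k)_\lambda$ and $S(\mathfrak k)_{-\lambda}$ is free of rank at most $1$.
   Context: For a finite-dimensional Lie algebra $\mathfrak k$ over an algebraically closed field $\mathbb C$ of characteristic $0$, the adjoint action extends to $S(\mathfrak k)$ by derivations. $Y(\mathfrak k)$ is the algebra of invariants; for $\mu\in\mathfrak k^*$, $S(\mathfrak k)_\mu=\{f\in S(\mathfrak k): x\cdot f=\mu(x)f\ \forall x\in\mathfrak k\}$, a $Y(\mathfrak k)$-module. A semi-invariant is a nonzero element of some $S(\mathfrak k)_\mu$, $\mu$ being its weight. *)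

From HB Require Import structures.
From mathcomp Require Import all_boot all_order all_fingroup all_algebra.
From mathcomp Require Import mpoly.
Set Implicit Arguments. Unset Strict Implicit. Unset Printing Implicit Defensive.
Import Order.TTheory GRing.Theory.
Local Open Scope ring_scope.

(* The Lie algebra k is F^n (row vectors, standard basis e_j = delta_mx 0 j)
   with a bracket [.,.]. *)
Definition is_lie_bracket (F : fieldType) (n : nat)
  (br : 'rV[F]_n -> 'rV[F]_n -> 'rV[F]_n) : Prop :=
  [/\ (forall (a : F) u v w, br (a *: u + v) w = a *: br u w + br v w),
      (forall (a : F) u v w, br u (a *: v + w) = a *: br u v + br u w),
      (forall u, br u u = 0) &
      (forall u v w, br u (br v w) + br v (br w u) + br w (br u v) = 0)].

Definition lin_functional (F : fieldType) (n : nat) (mu : 'rV[F]_n -> F) : Prop :=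
  forall (a : F) u v, mu (a *: u + v) = a * mu u + mu v.

(* S(k) = F[X_0, ..., X_{n-1}], X_j corresponding to e_j.  The element of
   S(k) corresponding to a vector u of k: *)
Definition vec_poly (F : fieldType) (n : nat) (u : 'rV[F]_n) : {mpoly F[n]} :=
  \sum_(l < n) u 0 l *: 'X_l.

(* The adjoint action of v in k, extended to S(k) as a derivation:
   the unique derivation with X_j |-> [v, e_j]. *)
Definition ad_act (F : fieldType) (n : nat)
  (br : 'rV[F]_n -> 'rV[F]_n -> 'rV[F]_n) (v : 'rV[F]_n) (f : {mpoly F[n]})
  : {mpoly F[n]} :=
  \sum_(j < n) vec_poly (br v (delta_mx 0 j)) * f^`M(j).

Definition semi_inv_space (F : fieldType) (n : nat)
  (br : 'rV[F]_n -> 'rV[F]_n -> 'rV[F]_n) (mu : 'rV[F]_n -> F)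
  (f : {mpoly F[n]}) : Prop :=
  forall v : 'rV[F]_n, ad_act br v f = mu v *: f.

Definition invariant (F : fieldType) (n : nat)
  (br : 'rV[F]_n -> 'rV[F]_n -> 'rV[F]_n) (f : {mpoly F[n]}) : Prop :=
  forall v : 'rV[F]_n, ad_act br v f = 0.

Definition Y_unit (F : fieldType) (n : nat) (br : 'rV[F]_n -> 'rV[F]_n -> 'rV[F]_n)
  (u : {mpoly F[n]}) : Prop :=
  invariant br u /\ exists2 w, invariant br w & u * w = 1.

Definition Y_irreducible (F : fieldType) (n : nat) (br : 'rV[F]_n -> 'rV[F]_n -> 'rV[F]_n)
  (p : {mpoly F[n]}) : Prop :=
  [/\ invariant br p, p != 0, ~ Y_unit br p &
      forall a b, invariant br a -> invariant br b -> p = a * b ->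
        Y_unit br a \/ Y_unit br b].

Definition Y_associate (F : fieldType) (n : nat) (br : 'rV[F]_n -> 'rV[F]_n -> 'rV[F]_n)
  (p q : {mpoly F[n]}) : Prop :=
  exists2 u, Y_unit br u & p = u * q.

(* Y(k) is a unique factorisation domain: every nonzero nonunit of Y(k) is a
   product of irreducibles of Y(k), uniquely up to order and associates.
   (Y(k) is a subring of the domain S(k), hence an integral domain.) *)
Definition Y_is_UFD (F : fieldType) (n : nat) (br : 'rV[F]_n -> 'rV[F]_n -> 'rV[F]_n)
  : Prop :=
  (forall f, invariant br f -> f != 0 -> ~ Y_unit br f ->
     exists s : seq {mpoly F[n]},
       [/\ s != [::], (forall p, p \in s -> Y_irreducible br p) &
           f = \prod_(p <- s) p]) /\
  (forall s1 s2 : seq {mpoly F[n]},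
     (forall p, p \in s1 -> Y_irreducible br p) ->
     (forall p, p \in s2 -> Y_irreducible br p) ->
     \prod_(p <- s1) p = \prod_(p <- s2) p ->
     size s1 = size s2 /\
     exists sigma : 'S_(size s1),
       forall i : 'I_(size s1),
         Y_associate br (nth 0 s1 i) (nth 0 s2 (sigma i))).

Definition S_irreducible (F : fieldType) (n : nat) (p : {mpoly F[n]}) : Prop :=
  [/\ p != 0, p \isn't a GRing.unit &
      forall a b : {mpoly F[n]}, p = a * b ->
        a \is a GRing.unit \/ b \is a GRing.unit].

Definition free_of_rank (F : fieldType) (n : nat)
  (br : 'rV[F]_n -> 'rV[F]_n -> 'rV[F]_n) (mu : 'rV[F]_n -> F) (r : nat) : Prop :=
  exists b : 'I_r -> {mpoly F[n]},
    [/\ (forall i, semi_inv_space br mu (b i)),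
        (forall f, semi_inv_space br mu f ->
           exists a : 'I_r -> {mpoly F[n]},
             (forall i, invariant br (a i)) /\ f = \sum_(i < r) a i * b i) &
        (forall a a' : 'I_r -> {mpoly F[n]},
           (forall i, invariant br (a i)) -> (forall i, invariant br (a' i)) ->
           \sum_(i < r) a i * b i = \sum_(i < r) a' i * b i -> a =1 a')].

From Pilot Require Import Defs.
From HB Require Import structures.
From mathcomp Require Import all_boot all_order all_fingroup all_algebra.
From mathcomp Require Import mpoly.
From Stdlib Require Import Classical.
From mathcomp Require Import zify ring.
Import GRing.Theory.
Local Open Scope ring_scope.

Set Implicit Arguments. Unset Strict Implicit. Unset Printing Implicit Defensive.

(* eqtype's [invariant] shadows the invariants Y(k) of Defs. *)
Local Notation invariant := Defs.invariant.

(* The proof rests on S(k) = F[X_0, ..., X_{n-1}] being factorial, i.e. every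
   irreducible polynomial is prime.  This is Gauss' lemma (irreducibles of
   D[X] are prime when those of D are), proved with pseudo-division in D[X]
   rather than the fraction field of D, and iterated over the number of
   variables through F[X_0..X_n] = F[X_0..X_{n-1}][X_n].

   For the theorem: if S(k)_{-lambda} = 0 it is free of rank 0.  Otherwise
   take g != 0 of weight -lambda.  Then x g is a nonconstant invariant, and
   the prime x divides one of its Y(k)-irreducible factors q = h x, where h
   has weight -lambda.  For f of weight lambda and g' of weight -lambda,
   q (f g') = (f h) (x g') holds in Y(k), and q is prime in the factorial
   ring Y(k); so x divides f or h divides g' in Y(k).  Hence either
   S(k)_lambda = Y(k) x, or S(k)_{-lambda} = Y(k) h: one of them is free of
   rank 1. *)

Lemma least_witness (P : nat -> Prop) :
  (exists i, P i) -> exists i, P i /\ forall k, (k < i)%N -> ~ P k.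
Proof.
case=> i; elim/ltn_ind: i => i IH Pi.
case: (classic (exists2 k, (k < i)%N & P k)) => [[k lt_ki Pk] | none_below].
  exact: IH lt_ki Pk.
by exists i; split=> // k lt_ki Pk; apply: none_below; exists k.
Qed.

Definition divides (R : comPzRingType) (a b : R) : Prop := exists c, b = c * a.

(* Irreducible elements (Defs.S_irreducible is this notion in S(k)), and
   rings in which every irreducible is prime. *)
Definition irreducible_elt (R : comUnitRingType) (p : R) : Prop :=
  [/\ p != 0, p \isn't a GRing.unit &
      forall a b, p = a * b -> a \is a GRing.unit \/ b \is a GRing.unit].

Definition irreducibles_prime (R : comUnitRingType) : Prop :=
  forall p : R, irreducible_elt p ->
    forall a b, divides p (a * b) -> divides p a \/ divides p b.

Section Divisibility.
Variable R : comPzRingType.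
Implicit Types a b c : R.

Lemma divides_refl a : divides a a. Proof. by exists 1; rewrite mul1r. Qed.

Lemma dividesMr a b c : divides a b -> divides a (b * c).
Proof. by case=> k ->; exists (k * c); rewrite mulrAC. Qed.

Lemma dividesMl a b c : divides a b -> divides a (c * b).
Proof. by case=> k ->; exists (c * k); rewrite mulrA. Qed.

Lemma dividesB a b c : divides a b -> divides a c -> divides a (b - c).
Proof. by case=> k -> [l ->]; exists (k - l); rewrite mulrBl. Qed.

Lemma divides_sum a (I : Type) (s : seq I) (P : pred I) (F : I -> R) :
  (forall i, P i -> divides a (F i)) -> divides a (\sum_(i <- s | P i) F i).
Proof.
move=> a_F; elim/big_rec: _ => [|i x Pi [k ->]]; first by exists 0; rewrite mul0r.
by case: (a_F i Pi) => l ->; exists (l + k); rewrite mulrDl.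
Qed.
End Divisibility.

Section Irreducible.
Variable R : comUnitRingType.

Lemma reducible_split (a : R) :
  a != 0 -> a \isn't a GRing.unit -> ~ irreducible_elt a ->
  exists u v, [/\ a = u * v, u \isn't a GRing.unit & v \isn't a GRing.unit].
Proof.
move=> a0 a_nu not_irr; apply: NNPP => no_split; apply: not_irr.
split=> // u v a_uv; apply: NNPP => /not_or_and [u_nu v_nu].
by apply: no_split; exists u, v; split=> //; apply/negP.
Qed.

Lemma prime_divides_prod (p : R) (s : seq R) :
  irreducibles_prime R -> irreducible_elt p ->
  divides p (\prod_(q <- s) q) -> exists2 q, q \in s & divides p q.
Proof.
move=> primeR irr_p; elim: s => [|a s IH].
  rewrite big_nil => -[c c_p1]; case: irr_p => _ /negP[].
  by apply/unitrPr; exists c; rewrite mulrC.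
rewrite big_cons => /(primeR _ irr_p) [p_a | /IH [q q_s p_q]].
  by exists a; rewrite ?mem_head.
by exists q; rewrite // in_cons q_s orbT.
Qed.

Lemma irreducibles_prime_iso (A : comUnitRingType) (f : {rmorphism A -> R}) :
  injective f -> (forall b, exists a, f a = b) ->
  irreducibles_prime R -> irreducibles_prime A.
Proof.
move=> f_inj f_surj primeR.
have divides_f a b : divides (f a) (f b) -> divides a b.
  case=> c; have [c' <-] := f_surj c => e.
  by exists c'; apply: f_inj; rewrite rmorphM.
have unit_f a : f a \is a GRing.unit -> a \is a GRing.unit.
  case/unitrPr => v; have [v' <-] := f_surj v => e; apply/unitrPr; exists v'.
  by apply: f_inj; rewrite rmorphM rmorph1.
move=> p [p0 p_nu irr_p] a b p_ab.
have irr_fp : irreducible_elt (f p).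
  split.
  - by apply: contraNneq p0 => e; apply/eqP/f_inj; rewrite e rmorph0.
  - by apply: contraNN p_nu; apply: unit_f.
  move=> u v; have [u' <-] := f_surj u; have [v' <-] := f_surj v.
  rewrite -(rmorphM f) => /f_inj /irr_p [] /(rmorph_unit f); by [left | right].
have : divides (f p) (f a * f b).
  by case: p_ab => c e; exists (f c); rewrite -(rmorphM f) e rmorphM.
by case/(primeR _ irr_fp) => /divides_f; [left | right].
Qed.
End Irreducible.

(* D is a domain whose irreducibles are prime, and sz is a
   size function strictly increasing under multiplication by nonunits (so
   that every nonzero nonunit of D has an irreducible factor). *)
Section GaussLemma.
Variable D : idomainType.
Variable sz : D -> nat.
Hypothesis sz_mul_nonunit : forall a b : D,
  a != 0 -> b != 0 -> b \isn't a GRing.unit -> (sz a < sz (a * b))%N.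
Hypothesis primeD : irreducibles_prime D.

Lemma sz_ind (P : D -> Prop) :
  (forall c, (forall c', (sz c' < sz c)%N -> P c') -> P c) -> forall c, P c.
Proof.
move=> IH; suff all_k k c : sz c = k -> P c by move=> c; apply: (all_k _ c erefl).
elim/ltn_ind: k c => k IHk c skc; apply: IH => c' lt_c'.
by apply: (IHk (sz c')); rewrite // -skc.
Qed.

Lemma irreducible_factor (c : D) : c != 0 -> c \isn't a GRing.unit ->
  exists p c', [/\ irreducible_elt p, c = p * c', c' != 0 & (sz c' < sz c)%N].
Proof.
elim/sz_ind: c => c IH c0 c_nu.
case: (classic (irreducible_elt c)) => [irr_c | red_c].
  exists c, 1; rewrite mulr1 oner_neq0; split=> //.
  by rewrite -[X in (_ < sz X)%N]mul1r sz_mul_nonunit ?oner_neq0.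
have [u [v [e u_nu v_nu]]] := reducible_split c0 c_nu red_c.
have /andP[u0 v0] : (u != 0) && (v != 0) by rewrite -negb_or -mulf_eq0 -e.
have lt_uc : (sz u < sz c)%N by rewrite e sz_mul_nonunit.
have [p [u' [irr_p eu u'0 _]]] := IH u lt_uc u0 u_nu.
have [p0 p_nu _] := irr_p.
have u'v0 : u' * v != 0 by rewrite mulf_neq0.
exists p, (u' * v); split=> //; first by rewrite e eu mulrA.
by rewrite e eu -mulrA [p * _]mulrC sz_mul_nonunit.
Qed.

Lemma unit_polyC (c : D) : (c%:P \is a GRing.unit) = (c \is a GRing.unit).
Proof.
rewrite poly_unitE coefC /= size_polyC.
by have [-> | //] := eqVneq c 0; rewrite unitr0.
Qed.

Lemma irreducible_polyC (c : D) : irreducible_elt (c%:P : {poly D}) -> irreducible_elt c.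
Proof.
case=> c0 c_nu irr_c; split; first by rewrite -polyC_eq0.
  by rewrite -unit_polyC.
by move=> a b e; have := irr_c a%:P b%:P; rewrite -polyCM -e !unit_polyC; apply.
Qed.

Lemma dividesC_coef (p : D) (g : {poly D}) :
  divides p%:P g <-> forall i, divides p g`_i.
Proof.
split=> [[c ->] i | p_g]; first by exists c`_i; rewrite coefMC.
have cof i : exists c, g`_i == c * p by case: (p_g i) => c ->; exists c.
exists (\poly_(i < size g) xchoose (cof i)); apply/polyP => i.
rewrite coefMC coef_poly; case: ltnP => [_ | le_gi].
  exact/eqP/(xchooseP (cof i)).
by rewrite mul0r nth_default.
Qed.

Lemma first_nondivisible_coef (p : D) (g : {poly D}) : ~ divides p%:P g ->
  exists i, ~ divides p g`_i /\ forall k, (k < i)%N -> divides p g`_k.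
Proof.
move=> /dividesC_coef not_all.
have [|i [bad_i below_i]] := least_witness (P := fun i => ~ divides p g`_i).
  by apply: NNPP => none; apply: not_all => i; apply: NNPP => bad; apply: none; exists i.
by exists i; split=> // k /below_i /NNPP.
Qed.

(* Content lemma: an irreducible constant p is prime in D[X].  If g_i, h_j
   are the first coefficients not divisible by p, then p divides all terms
   of the coefficient (gh)_(i+j) but g_i h_j. *)
Lemma polyC_prime (p : D) : irreducible_elt p -> forall g h : {poly D},
  divides p%:P (g * h) -> divides p%:P g \/ divides p%:P h.
Proof.
move=> irr_p g h /dividesC_coef p_gh; apply: NNPP => /not_or_and [].
move=> /first_nondivisible_coef [i [g_i below_i]].
move=> /first_nondivisible_coef [j [h_j below_j]].
have := p_gh (i + j)%N; rewrite coefM.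
have lt_i : (i < (i + j).+1)%N by rewrite ltnS leq_addr.
rewrite (bigD1 (Ordinal lt_i)) //= addKn.
set rest := \sum_(k < _ | _) _ => p_sum.
have p_rest : divides p rest.
  apply: divides_sum => k k_ne_i; case: (ltngtP k i) => [lt_ki | lt_ik | eq_ki].
  - exact/dividesMr/below_i.
  - by apply/dividesMl/below_j; have := ltn_ord k; lia.
  - by move: k_ne_i; rewrite -val_eqE /= eq_ki eqxx.
have : divides p (g`_i * h`_j) by rewrite -(addrK rest (_ * _)); apply: dividesB.
by case/(primeD irr_p).
Qed.

Lemma irreducible_no_constant_factor (f : {poly D}) (p : D) :
  irreducible_elt f -> (1 < size f)%N -> irreducible_elt p -> ~ divides p%:P f.
Proof.
move=> [f0 _ irr_f] f_gt1 [p0 p_nu _] [u e].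
have [u_unit | ] := irr_f _ _ e; last by rewrite unit_polyC (negbTE p_nu).
have u0 : u != 0 by apply: contraNneq f0 => u0; rewrite e u0 mul0r.
move: u_unit f_gt1; rewrite poly_unitE e size_mul ?polyC_eq0 // size_polyC p0.
by case/andP => /eqP ->.
Qed.

(* An irreducible f of positive degree dividing c * g, for a nonzero constant
   c, divides g: the irreducible factors of c are primes not dividing f. *)
Lemma cancel_constant (f : {poly D}) : irreducible_elt f -> (1 < size f)%N ->
  forall c g, c != 0 -> divides f (c%:P * g) -> divides f g.
Proof.
move=> irr_f f_gt1; elim/sz_ind => c IH g c0 [w e].
have [c_unit | c_nu] := boolP (c \is a GRing.unit).
  by exists (c^-1%:P * w); rewrite -mulrA -e mulrA -polyCM mulVr // mul1r.
have [p [c' [irr_p ec c'0 lt_c']]] := irreducible_factor c0 c_nu.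
have : divides p%:P (w * f).
  by rewrite -e ec polyCM -mulrA; apply/dividesMr/divides_refl.
case/(polyC_prime irr_p) => [[w' ew] | ]; last first.
  by move/(irreducible_no_constant_factor irr_f f_gt1 irr_p).
have p0 : (p%:P : {poly D}) != 0 by rewrite polyC_eq0; case: irr_p.
apply: (IH c' lt_c' g c'0); exists w'; apply: (mulIf p0).
by transitivity (c%:P * g); [rewrite ec polyCM; ring | rewrite e ew; ring].
Qed.

Lemma split_constant_multiple (f : {poly D}) : irreducible_elt f -> (1 < size f)%N ->
  forall c q r, c != 0 -> q * r = c%:P * f ->
  exists2 e : D, e != 0 & divides f (e%:P * q) \/ divides f (e%:P * r).
Proof.
move=> irr_f f_gt1; elim/sz_ind => c IH q r c0 e.
have [c_unit | c_nu] := boolP (c \is a GRing.unit).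
  have ef : f = (c^-1%:P * q) * r by rewrite -mulrA e mulrA -polyCM mulVr // mul1r.
  exists 1; first exact: oner_neq0.
  rewrite !mul1r; case: irr_f => _ _ /(_ _ _ ef) [u_unit | r_unit].
    by right; exists (c^-1%:P * q)^-1; rewrite ef mulKr.
  by left; exists (c%:P * r^-1); rewrite -[q](mulrK r_unit) e; ring.
have [p [c' [irr_p ec c'0 lt_c']]] := irreducible_factor c0 c_nu.
have p0 : (p%:P : {poly D}) != 0 by rewrite polyC_eq0; case: irr_p.
have : divides p%:P (q * r) by rewrite e ec polyCM -mulrA; apply/dividesMr/divides_refl.
case/(polyC_prime irr_p) => [[q' eq'] | [r' er']].
  have e' : q' * r = c'%:P * f.
    by apply: (mulIf p0); rewrite mulrAC -eq' e ec polyCM; ring.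
  have [e1 e10 [f_q' | f_r]] := IH c' lt_c' q' r c'0 e'; exists e1 => //; last by right.
  by left; rewrite eq' mulrA; apply: dividesMr.
have e' : q * r' = c'%:P * f.
  by apply: (mulIf p0); rewrite -mulrA -er' e ec polyCM; ring.
have [e1 e10 [f_q | f_r']] := IH c' lt_c' q r' c'0 e'; exists e1 => //; first by left.
by right; rewrite er' mulrA; apply: dividesMr.
Qed.

Section TwoGeneratedIdeal.
Variables f g : {poly D}.

Definition in_ideal2 (t : {poly D}) : Prop := exists a b, t = a * f + b * g.

Lemma in_ideal2_l : in_ideal2 f.
Proof. by exists 1, 0; rewrite mul1r mul0r addr0. Qed.

Lemma in_ideal2_r : in_ideal2 g.
Proof. by exists 0, 1; rewrite mul1r mul0r add0r. Qed.

Lemma ideal2_min_elt : f != 0 -> exists r, [/\ r != 0, in_ideal2 r &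
  forall t, in_ideal2 t -> (size t < size r)%N -> t = 0].
Proof.
move=> f0.
have [|s [[r [[r0 r_id] size_r]] below_s]] :=
    least_witness (P := fun s => exists r, (r != 0 /\ in_ideal2 r) /\ size r = s).
  by exists (size f), f; split=> //; split=> //; apply: in_ideal2_l.
exists r; split=> // t t_id lt_tr; apply: NNPP => t0.
by apply: (below_s (size t)); [rewrite -size_r | exists t; split=> //; split=> //; apply/eqP].
Qed.

(* Such a minimal r pseudo-divides every element t of the ideal: the
   pseudo-remainder of t by r lies in the ideal and is smaller than r. *)
Lemma ideal2_min_pdivides r t : r != 0 -> in_ideal2 r ->
  (forall u, in_ideal2 u -> (size u < size r)%N -> u = 0) ->
  in_ideal2 t -> (lead_coef r ^+ scalp t r)%:P * t = t %/ r * r.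
Proof.
move=> r0 [a [b er]] r_min [a' [b' et]].
have e := Pdiv.Idomain.divp_eq t r; rewrite -mul_polyC in e.
suff mod0 : t %% r = 0 by rewrite e mod0 addr0.
apply: r_min (ltn_modpN0 _ r0).
set lc := (lead_coef r ^+ _)%:P in e *; set q := t %/ r in e *.
have -> : t %% r = lc * t - q * r by rewrite e addrAC subrr add0r.
clearbody lc q; exists (lc * a' - q * a), (lc * b' - q * b).
by rewrite {1}et er; ring.
Qed.
End TwoGeneratedIdeal.

(* For
   f of positive degree dividing g * h, take r of minimal size in (f, g).  If
   r is constant, f divides r * h.  Otherwise r pseudo-divides f, and since f
   is irreducible, f divides e * r for a constant e, hence f divides g. *)
Lemma poly_irreducibles_prime : irreducibles_prime {poly D}.
Proof.
move=> f irr_f g h f_gh.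
have [f_le1 | f_gt1] := leqP (size f) 1.
  have ef := size1_polyC f_le1.
  have irr_f0 : irreducible_elt f`_0 by apply: irreducible_polyC; rewrite -ef.
  by rewrite ef; apply: polyC_prime; rewrite // -ef.
have f0 : f != 0 by case: irr_f.
have [r [r0 r_id r_min]] := ideal2_min_elt g f0.
have r_f := ideal2_min_pdivides r0 r_id r_min (in_ideal2_l f g).
have r_g := ideal2_min_pdivides r0 r_id r_min (in_ideal2_r f g).
have [r_le1 | r_gt1] := leqP (size r) 1.
  right; have er := size1_polyC r_le1; case: r_id => a [b e_r].
  apply: (cancel_constant irr_f f_gt1 (c := r`_0)); first by rewrite -polyC_eq0 -er.
  case: f_gh => w ew; exists (a * h + b * w).
  rewrite -er e_r; transitivity (a * f * h + b * (g * h)); first by ring.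
  by rewrite ew; ring.
have lc_f0 : lead_coef r ^+ scalp f r != 0 by rewrite expf_neq0 ?lead_coef_eq0.
have [e e0 [[w ew] | [w ew]]] := split_constant_multiple irr_f f_gt1 lc_f0 (esym r_f).
  have ewr : w * r = (e * lead_coef r ^+ scalp f r)%:P.
    by apply: (mulIf f0); rewrite polyCM -[RHS]mulrA r_f [LHS]mulrAC -ew -[LHS]mulrA.
  have w0 : w != 0 by apply: contra_eq_neq ewr => ->; rewrite mul0r eq_sym polyC_eq0 mulf_neq0.
  have := congr1 (fun p : {poly D} => size p) ewr; rewrite size_polyC mulf_neq0 // size_mul //=.
  have := size_poly_gt0 w; rewrite w0; move: r_gt1; move: (size w) (size r) => sw sr.
  lia.
left; apply: (cancel_constant irr_f f_gt1 (c := e * lead_coef r ^+ scalp g r)).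
  by rewrite mulf_neq0 // expf_neq0 ?lead_coef_eq0.
by exists (w * (g %/ r)); rewrite polyCM -mulrA r_g mulrCA ew; ring.
Qed.
End GaussLemma.

Section UnivariateView.
Variable R : idomainType.
Variable n : nat.

Definition mnm_restr (m : 'X_{1..n.+1}) : 'X_{1..n} :=
  [multinom m (widen_ord (leqnSn n) i) | i < n].

Lemma mnm_restr_inj (m1 m2 : 'X_{1..n.+1}) :
  mnm_restr m1 = mnm_restr m2 -> m1 ord_max = m2 ord_max -> m1 = m2.
Proof.
move=> /mnmP e12 e_max; apply/mnmP => i; case: (unliftP ord_max i) => [j ->|->] //.
have -> : lift ord_max j = widen_ord (leqnSn n) j.
  by apply: val_inj; rewrite /= /bump leqNgt ltn_ord.
by have := e12 j; rewrite !mnmE.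
Qed.

Lemma mnm_restr_widen (m : 'X_{1..n}) : mnm_restr (mnmwiden m) = m.
Proof. by apply/mnmP => i; rewrite mnmE mnmwiden_widen. Qed.

Lemma muni_coef (p : {mpoly R[n.+1]}) m :
  ((muni p)`_(m ord_max))@_(mnm_restr m) = p@_m.
Proof.
rewrite [in RHS](mpolyE p) muniE coef_sum !raddf_sum /=.
apply: eq_bigr => m2 _; rewrite coefZ coefXn !mcoeffZ mcoeffX.
have -> : (m2 == m) = (mnm_restr m2 == mnm_restr m) && (m2 ord_max == m ord_max).
  apply/eqP/andP => [-> | [/eqP e1 /eqP e2]]; first by split.
  exact: mnm_restr_inj.
rewrite eq_sym; case: (m2 ord_max == m ord_max); last by rewrite andbF mulr0 mcoeff0 mulr0.
by rewrite andbT mulr1 mcoeffZ mcoeffX.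
Qed.

Lemma muni_inj : injective (@muni n R).
Proof. by move=> p q e; apply/mpolyP => m; rewrite -!muni_coef e. Qed.

Lemma muniX (m : 'X_{1..n.+1}) :
  muni ('X_[m] : {mpoly R[n.+1]}) = 'X_[mnm_restr m] *: 'X^(m ord_max).
Proof. by rewrite muniE msuppX big_seq1 mcoeffX eqxx scale1r. Qed.

Lemma muni_mwiden (c : {mpoly R[n]}) : muni (mwiden c) = c%:P.
Proof.
have -> : mwiden c = \sum_(m <- msupp c) c@_m *: 'X_[mnmwiden m].
  rewrite {1}(mpolyE c) (big_morph _ (@mwidenD _ _) (@mwiden0 _ _)).
  by apply: eq_bigr => m _; rewrite mwidenZ mwidenX.
rewrite raddf_sum [in RHS](mpolyE c) rmorph_sum /=.
apply: eq_bigr => m _; rewrite muniZ muniX mnm_restr_widen mnmwiden_ordmax.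
by rewrite expr0 -alg_polyC scalerA mul_mpolyC.
Qed.

Lemma muni_Xmax : muni ('X_ord_max : {mpoly R[n.+1]}) = 'X.
Proof.
rewrite muniX (_ : mnm_restr _ = 0%MM) ?mnmE ?eqxx ?mpolyX0 ?scale1r //.
by apply/mnmP => i; rewrite !mnmE -val_eqE /= eqn_leq leqNgt ltn_ord.
Qed.

Lemma mmultiK (q : {poly {mpoly R[n]}}) : muni (mmulti q) = q.
Proof.
rewrite raddf_sum /= -[in RHS](coefK q) poly_def.
by apply: eq_bigr => i _; rewrite rmorphM rmorphXn /= muni_mwiden muni_Xmax mul_polyC.
Qed.
End UnivariateView.

Section MultivariatePrime.
Variable F : fieldType.

Lemma mpolyC_unit n (c : F) : c != 0 -> (c%:MP : {mpoly F[n]}) \is a GRing.unit.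
Proof. by move=> c0; apply/unitrPr; exists c^-1%:MP; rewrite -mpolyCM mulfV. Qed.

Lemma msize_nonunit n (b : {mpoly F[n]}) : b != 0 -> b \isn't a GRing.unit ->
  (1 < msize b)%N.
Proof.
move=> b0 b_nu; rewrite ltnNge; apply: contra b_nu => /msize1_polyC eb.
by rewrite eb mpolyC_unit // -(mpolyC_eq0 n) -eb.
Qed.

Lemma msize_mul_nonunit n (a b : {mpoly F[n]}) :
  a != 0 -> b != 0 -> b \isn't a GRing.unit -> (msize a < msize (a * b))%N.
Proof.
move=> a0 b0 b_nu; rewrite msizeM //; have := msize_nonunit b0 b_nu.
have := msize_poly_eq0 a; rewrite (negbTE a0).
move: (msize a) (msize b) => sa sb; lia.
Qed.

Lemma mpoly_irreducibles_prime n : irreducibles_prime {mpoly F[n]}.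
Proof.
elim: n => [|n IH].
  move=> p [p0 p_nu _]; case/negP: p_nu; rewrite (nvar0_mpolyC p) mpolyC_unit //.
  by apply: contraNneq p0 => e; rewrite (nvar0_mpolyC p) e.
apply: (@irreducibles_prime_iso _ _ (@muni n F) (@muni_inj _ n)).
  by move=> q; exists (mmulti q); apply: mmultiK.
exact: (poly_irreducibles_prime (@msize_mul_nonunit n) IH).
Qed.
End MultivariatePrime.

Section SemiInvariants.
Variable F : fieldType.
Variable n : nat.
Variable br : 'rV[F]_n -> 'rV[F]_n -> 'rV[F]_n.
Implicit Types f g : {mpoly F[n]}.

Lemma ad_actM v f g :
  ad_act br v (f * g) = ad_act br v f * g + f * ad_act br v g.
Proof.
rewrite /ad_act big_distrl big_distrr -big_split /=.
by apply: eq_bigr => j _; rewrite mderivM; ring.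
Qed.

Lemma invariantC (c : F) : invariant br c%:MP.
Proof. by move=> v; rewrite /ad_act big1 // => j _; rewrite mderivC mulr0. Qed.

Lemma invariantM f g : invariant br f -> invariant br g -> invariant br (f * g).
Proof. by move=> f_inv g_inv v; rewrite ad_actM f_inv g_inv mul0r mulr0 addr0. Qed.

Lemma invariant_prod (s : seq {mpoly F[n]}) :
  (forall p, p \in s -> invariant br p) -> invariant br (\prod_(p <- s) p).
Proof.
elim: s => [|a s IH] s_inv; first by rewrite big_nil -(mpolyC1 n F); apply: invariantC.
rewrite big_cons; apply: invariantM; first by apply: s_inv; rewrite mem_head.
by apply: IH => p p_s; apply: s_inv; rewrite in_cons p_s orbT.
Qed.

Lemma semi_invM (mu nu : 'rV[F]_n -> F) f g :
  semi_inv_space br mu f -> semi_inv_space br nu g ->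
  semi_inv_space br (fun v => mu v + nu v) (f * g).
Proof. by move=> f_mu g_nu v; rewrite ad_actM f_mu g_nu scalerDl -scalerAl -scalerAr. Qed.

Lemma semi_inv_opp_invariant (mu : 'rV[F]_n -> F) f g :
  semi_inv_space br mu f -> semi_inv_space br (fun v => - mu v) g ->
  invariant br (f * g).
Proof. by move=> f_mu g_mu v; rewrite (semi_invM f_mu g_mu) subrr scale0r. Qed.

Lemma semi_inv_cofactor (mu rho : 'rV[F]_n -> F) f g : f != 0 ->
  semi_inv_space br mu f -> semi_inv_space br rho (f * g) ->
  semi_inv_space br (fun v => rho v - mu v) g.
Proof.
move=> f0 f_mu fg_rho v; apply: (mulfI f0).
have := fg_rho v; rewrite ad_actM f_mu -scalerAl => /(canRL (addKr _)) ->.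
by rewrite -scalerAr scalerBl addrC.
Qed.

Lemma Y_unit_iff u : Y_unit br u <-> u \is a GRing.unit.
Proof.
split=> [[_ [w _ uw1]] | u_unit]; first by apply/unitrPr; exists w.
have /andP[/eqP eu c_unit] : u \in @mpoly_unit n F := u_unit.
rewrite eu; split; first exact: invariantC.
by exists (u@_0)^-1%:MP; [exact: invariantC | rewrite -mpolyCM mulrV].
Qed.
End SemiInvariants.

Section FreeModules.
Variable F : fieldType.
Variable n : nat.
Variable br : 'rV[F]_n -> 'rV[F]_n -> 'rV[F]_n.

Lemma free_rank0 (mu : 'rV[F]_n -> F) :
  (forall f, semi_inv_space br mu f -> f = 0) -> free_of_rank br mu 0.
Proof.
move=> only0; exists (fun _ => 0); split; [by case | | by move=> a a' _ _ _ []].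
by move=> f /only0 ->; exists (fun _ => 0); rewrite big_ord0; split=> //; case.
Qed.

Lemma free_rank1 (mu : 'rV[F]_n -> F) (b : {mpoly F[n]}) :
  b != 0 -> semi_inv_space br mu b ->
  (forall f, semi_inv_space br mu f -> exists2 a, invariant br a & f = a * b) ->
  free_of_rank br mu 1.
Proof.
move=> b0 b_mu gen_b; exists (fun _ => b); split=> //.
  by move=> f /gen_b [a a_inv ->]; exists (fun _ => a); rewrite big_ord1.
by move=> a a' _ _; rewrite !big_ord1 => /(mulIf b0) e i; rewrite (ord1 i).
Qed.
End FreeModules.

Section FactorialInvariants.
Variable F : fieldType.
Variable n : nat.
Variable br : 'rV[F]_n -> 'rV[F]_n -> 'rV[F]_n.
Hypothesis hUFD : Y_is_UFD br.

Lemma Y_associate_in_factorisation (z : {mpoly F[n]}) s1 s2 :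
  Y_irreducible br z ->
  (forall p, p \in s1 -> Y_irreducible br p) ->
  (forall p, p \in s2 -> Y_irreducible br p) ->
  \prod_(p <- s1) p = z * \prod_(p <- s2) p ->
  exists2 q, q \in s1 & Y_associate br q z.
Proof.
move=> irr_z irr_s1 irr_s2 e12.
have irr_zs2 p : p \in z :: s2 -> Y_irreducible br p.
  by rewrite in_cons => /orP[/eqP -> | /irr_s2].
have e12' : \prod_(p <- s1) p = \prod_(p <- z :: s2) p by rewrite big_cons.
have [size12 [sigma assoc]] := hUFD.2 _ _ irr_s1 irr_zs2 e12'.
have s1_gt0 : (0 < size s1)%N by rewrite size12.
set i := (sigma^-1)%g (Ordinal s1_gt0).
by exists (nth 0 s1 i); [rewrite mem_nth | have := assoc i; rewrite permKV].
Qed.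

Lemma prod_multiple (s : seq {mpoly F[n]}) q t z :
  (forall p, p \in s -> invariant br p) -> q \in s -> q = t * z -> invariant br t ->
  exists2 t', invariant br t' & \prod_(p <- s) p = t' * z.
Proof.
move=> s_inv q_s eq t_inv; exists (t * \prod_(p <- rem q s) p).
  by apply: invariantM => //; apply: invariant_prod => p /mem_rem /s_inv.
by rewrite (big_rem _ q_s) /= eq; ring.
Qed.

Lemma Y_irreducible_prime (z u v w : {mpoly F[n]}) : Y_irreducible br z ->
  invariant br u -> invariant br v -> invariant br w -> z * w = u * v ->
  exists2 t, invariant br t & u = t * z \/ v = t * z.
Proof.
move=> irr_z u_inv v_inv w_inv e.
have inv0 : invariant br 0 by rewrite -(mpolyC0 n F); apply: invariantC.
have [-> | u0] := eqVneq u 0; first by exists 0; rewrite ?mul0r; [|left].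
have [-> | v0] := eqVneq v 0; first by exists 0; rewrite ?mul0r; [|right].
case: (classic (Y_unit br u)) => [[_ [u' u'_inv uu']] | u_nu].
  exists (u' * w); first exact: invariantM.
  right; transitivity (u' * (u * v)); first by rewrite mulrA [u' * u]mulrC uu' mul1r.
  by rewrite -e; ring.
case: (classic (Y_unit br v)) => [[_ [v' v'_inv vv']] | v_nu].
  exists (v' * w); first exact: invariantM.
  left; transitivity (v' * (u * v)); first by rewrite mulrCA [v' * v]mulrC vv' mulr1.
  by rewrite -e; ring.
have [_ _ _ irr_z'] := irr_z.
case: (classic (Y_unit br w)) => [[_ [w' w'_inv ww']] | w_nu].
  have ez : z = u * (v * w') by rewrite mulrA -e -mulrA ww' mulr1.
  case: (irr_z' _ _ u_inv (invariantM v_inv w'_inv) ez) => // /Y_unit_iff.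
  by rewrite unitrM => /andP[/Y_unit_iff].
have w0 : w != 0 by apply: contraNneq (mulf_neq0 u0 v0) => w0; rewrite -e w0 mulr0.
have [su [_ su_irr eu]] := hUFD.1 u u_inv u0 u_nu.
have [sv [_ sv_irr ev]] := hUFD.1 v v_inv v0 v_nu.
have [sw [_ sw_irr ew]] := hUFD.1 w w_inv w0 w_nu.
have s_irr p : p \in su ++ sv -> Y_irreducible br p.
  by rewrite mem_cat => /orP[/su_irr | /sv_irr].
have e_prod : \prod_(p <- su ++ sv) p = z * \prod_(p <- sw) p.
  by rewrite big_cat -eu -ev -ew e.
have [q q_s [t [t_inv _] eq]] := Y_associate_in_factorisation irr_z s_irr sw_irr e_prod.
have inv_of (s : seq {mpoly F[n]}) :
  (forall p, p \in s -> Y_irreducible br p) -> forall p, p \in s -> invariant br p.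
  by move=> s_irr' p /s_irr' [].
move: q_s; rewrite mem_cat => /orP[q_su | q_sv].
  have [t' t'_inv eu'] := prod_multiple (inv_of _ su_irr) q_su eq t_inv.
  by exists t' => //; left; rewrite eu eu'.
have [t' t'_inv ev'] := prod_multiple (inv_of _ sv_irr) q_sv eq t_inv.
by exists t' => //; right; rewrite ev ev'.
Qed.

Section IrreducibleSemiInvariant.
Variable lambda : 'rV[F]_n -> F.
Variable x : {mpoly F[n]}.
Hypothesis x0 : x != 0.
Hypothesis x_w : semi_inv_space br lambda x.
Hypothesis irr_x : irreducible_elt x.

(* The
   prime x of S(k) divides one of its Y(k)-irreducible factors q = h x, and
   the cofactor h is a nonzero semi-invariant of weight -lambda. *)
Lemma Y_irreducible_multiple g : g != 0 -> semi_inv_space br (fun v => - lambda v) g ->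
  exists q h, [/\ Y_irreducible br q, q = h * x, h != 0 &
                  semi_inv_space br (fun v => - lambda v) h].
Proof.
move=> g0 g_w.
have xg_inv := semi_inv_opp_invariant x_w g_w.
have xg0 : x * g != 0 by rewrite mulf_neq0.
have xg_nu : ~ Y_unit br (x * g).
  by case: irr_x => _ x_nu _ /Y_unit_iff; rewrite unitrM (negbTE x_nu).
have [s [_ s_irr exg]] := hUFD.1 _ xg_inv xg0 xg_nu.
have : divides x (\prod_(p <- s) p) by rewrite -exg; exists g; rewrite mulrC.
case/(prime_divides_prod (@mpoly_irreducibles_prime F n) irr_x) => q q_s [h eq].
have [q_inv q0 _ _] := s_irr q q_s.
have xh_inv : semi_inv_space br (fun _ => 0) (x * h).
  by move=> v; rewrite mulrC -eq q_inv scale0r.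
exists q, h; split; [exact: s_irr | by [] | |].
  by apply: contraNneq q0 => h0; rewrite eq h0 mul0r.
by move=> v; rewrite (semi_inv_cofactor x0 x_w xh_inv v) sub0r.
Qed.

(* For such q = h x, every f of weight lambda and g of weight -lambda satisfy
   q (f g) = (f h) (x g) in Y(k); as q is prime in Y(k), either x divides f
   or h divides g in Y(k). *)
Lemma Y_multiple_dichotomy q h f g : Y_irreducible br q -> q = h * x -> h != 0 ->
  semi_inv_space br (fun v => - lambda v) h ->
  semi_inv_space br lambda f -> semi_inv_space br (fun v => - lambda v) g ->
  (exists2 a, invariant br a & f = a * x) \/ (exists2 a, invariant br a & g = a * h).
Proof.
move=> irr_q eq h0 h_w f_w g_w.
have e : q * (f * g) = (f * h) * (x * g) by rewrite eq; ring.
have [t t_inv [E | E]] := Y_irreducible_prime irr_q (semi_inv_opp_invariant f_w h_w)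
  (semi_inv_opp_invariant x_w g_w) (semi_inv_opp_invariant f_w g_w) e.
  by left; exists t => //; apply: (mulIf h0); rewrite E eq; ring.
by right; exists t => //; apply: (mulfI x0); rewrite E eq; ring.
Qed.
End IrreducibleSemiInvariant.
End FactorialInvariants.

Theorem mainTheorem8 (F : closedFieldType) (hchar : [pchar F] =i pred0)
  (n : nat) (br : 'rV[F]_n -> 'rV[F]_n -> 'rV[F]_n)
  (hlie : is_lie_bracket br) (hUFD : Y_is_UFD br)
  (lambda : 'rV[F]_n -> F) (hlin : lin_functional lambda)
  (hlam0 : exists v, lambda v != 0)
  (x : {mpoly F[n]}) (hx0 : x != 0) (hxw : semi_inv_space br lambda x)
  (hxirr : S_irreducible x) :
  (exists2 r, (r <= 1)%N & free_of_rank br lambda r) \/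
  (exists2 r, (r <= 1)%N & free_of_rank br (fun v => - lambda v) r).
Proof.
case: (classic (exists2 g, g != 0 & semi_inv_space br (fun v => - lambda v) g))
  => [[g g0 g_w] | no_g]; last first.
  right; exists 0%N => //; apply: free_rank0 => g g_w.
  by apply: NNPP => g0; apply: no_g; exists g => //; apply/eqP.
have [q [h [irr_q eq h0 h_w]]] := Y_irreducible_multiple hUFD hx0 hxw hxirr g0 g_w.
case: (classic (forall f, semi_inv_space br lambda f ->
                  exists2 a, invariant br a & f = a * x)) => [x_gen | not_x_gen].
  by left; exists 1%N => //; apply: free_rank1 hx0 hxw x_gen.
have [f not_f] := not_all_ex_not _ _ not_x_gen.
have [f_w f_not] := imply_to_and _ _ not_f.
right; exists 1%N => //; apply: (free_rank1 h0 h_w) => g' g'_w.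
by case: (Y_multiple_dichotomy hUFD hx0 hxw irr_q eq h0 h_w f_w g'_w) => // /f_not.
Qed.
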